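(* Let $G=(N,\Sigma,R,S)$ be a linear context-free grammar and fix any total order on $R$. Then $\Phi_3(G)$ is a test set for $L(G)$, and for every $k\ge 0$ the set $\Phi_k(G)$ contains at most $\sum_{i=0}^k |R|^i$ words.
   Context: A context-free grammar is $G=(N,\Sigma,R,S)$ with non-terminals $N$, terminals $\Sigma$, productions $R\subseteq N\times(N\uplus\Sigma)^*$, start symbol $S$; $L(G)$ is its language. $G$ is linear if every right-hand side has at most one non-terminal occurrence. A morphism $f:\Sigma^*\to\Gamma^*$ satisfies $f(\epsilon)=\epsilon$, $f(uv)=f(u)f(v)$. $T\subseteq L$ is a test set for $L$ if for every alphabet $\Gamma$ and morphisms $f,g:\Sigma^*\to\Gamma^*$ agreeing on all words of $T$, $f$ and $g$ agree on all words of $L$. Graph of $G$: vertices $N\uplus\{\bot\}$; for each rule $r = A\to uBv$ with $B\in N$, $u,v\in\Sigma^*$ there is an edge $(A,r,B)$ with $\overleftarrow{r}=u$, $\overrightarrow{r}=v$; for each rule $r=A\to u$ with $u\in\Sigma^*$ there is an edge $(A,r,\bot)$ with $\overleftarrow{r}=u$, $\overrightarrow{r}=\epsilon$. A path is a sequence of consecutive edges $(A_1,r_1,A_2)(A_2,r_2,A_3)\cdots(A_n,r_n,A_{n+1})$ (the empty path from a vertex to itself is allowed); it is accepting if $A_1=S$ and $A_{n+1}=\bot$, and then it corresponds to the word $\overleftarrow{r_1}\cdots\overleftarrow{r_n}\,\overrightarrow{r_n}\cdots\overrightarrow{r_1}\in L(G)$. Paths are identified with their rule sequences in $R^*$ and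 ordered by: $P_1<P_2$ iff $|P_1|<|P_2|$, or $|P_1|=|P_2|$ and $P_1$ is lexicographically smaller w.r.t. the fixed total order on $R$. A path is optimal if it is the $<$-minimal path among all paths from its first vertex to its last vertex. $\Phi_k(G)$ is the set of words corresponding to accepting paths of the form $P_1e_1P_2e_2\cdots P_ne_nP_{n+1}$ with $n\le k$, each $e_i$ a single edge, each $P_i$ ($1\le i\le n+1$) optimal, and each $P_ie_i$ ($1\le i\le n$) not optimal. *)

From mathcomp Require Import all_boot.
Set Implicit Arguments. Unset Strict Implicit. Unset Printing Implicit Defensive.

Section LinearGrammar.
Variables (N Sigma : eqType).

(* A production of a linear grammar: (A, inl (u, B, v)) is A -> u B v,
   (A, inr u) is A -> u  (u, v terminal words, B a non-terminal). *)
Definition rule := (N * ((seq Sigma * N * seq Sigma) + seq Sigma))%type.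

Definition lhs (r : rule) : N := r.1.
(* target vertex in the graph; None stands for the sink vertex bot *)
Definition tgt (r : rule) : option N :=
  match r.2 with inl (_, B, _) => Some B | inr _ => None end.
Definition lword (r : rule) : seq Sigma :=
  match r.2 with inl (u, _, _) => u | inr u => u end.
Definition rword (r : rule) : seq Sigma :=
  match r.2 with inl (_, _, v) => v | inr _ => [::] end.

Variable rules : seq rule.   (* the set R, listed in the fixed total order *)
Variable S : N.

Inductive derives : N -> seq Sigma -> Prop :=
| der_term A u : (A, inr u) \in rules -> derives A u
| der_nt A u B v w : (A, inl (u, B, v)) \in rules -> derives B w ->
    derives A (u ++ w ++ v).

Definition lang (w : seq Sigma) : Prop := derives S w.

Fixpoint is_path (x : option N) (p : seq rule) (y : option N) : bool :=
  match p with
  | [::] => x == y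
  | r :: p' => [&& r \in rules, x == Some (lhs r) & is_path (tgt r) p' y]
  end.

Definition path_word (p : seq rule) : seq Sigma :=
  flatten (map lword p) ++ flatten (rev (map rword p)).

Fixpoint lexlt (s t : seq nat) : bool :=
  match s, t with
  | a :: s', b :: t' => (a < b) || ((a == b) && lexlt s' t')
  | _, _ => false
  end.

Definition path_lt (p q : seq rule) : bool :=
  (size p < size q) ||
  ((size p == size q) &&
   lexlt (map (index^~ rules) p) (map (index^~ rules) q)).

Definition optimal (p : seq rule) : Prop :=
  exists x y, is_path x p y /\ forall q, is_path x q y -> ~~ path_lt q p.

(* decomp n p : p = P1 e1 P2 e2 ... Pm em P(m+1) with m <= n, each Pi optimal
   and each Pi ei not optimal *)
Inductive decomp : nat -> seq rule -> Prop :=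
| decomp_last n P : optimal P -> decomp n P
| decomp_cons n P e Q : optimal P -> ~ optimal (rcons P e) -> decomp n Q ->
    decomp n.+1 (P ++ e :: Q).

Definition Phi (k : nat) (w : seq Sigma) : Prop :=
  exists p, [/\ is_path (Some S) p None, decomp k p & path_word p = w].

End LinearGrammar.

Definition morph (Sigma Gamma : Type) (h : Sigma -> seq Gamma) (w : seq Sigma)
  : seq Gamma := flatten (map h w).

Definition test_set (Sigma : Type) (L T : seq Sigma -> Prop) : Prop :=
  (forall w, T w -> L w) /\
  forall (Gamma : finType) (f g : Sigma -> seq Gamma),
    (forall w, T w -> morph f w = morph g w) ->
    forall w, L w -> morph f w = morph g w.

(* Two morphisms that agree on Phi_3 agree on the word of every accepting path, by
   induction along the order on paths.  A path outside Phi_3 splits as X1 X2 X3 X4 R with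
   every Xi non-optimal, so each Xi has a strictly smaller replacement Oi with the same
   endpoints, and the 15 paths obtained by replacing some but not all of the Xi are smaller.
   Their words are corners of a cube of nested words l1 l2 l3 l4 m r4 r3 r2 r1, and
   agreement on 15 corners forces agreement on the last one: after embedding the free
   monoid into a group in which commutation is transitive on non-trivial elements (a
   congruence subgroup of SL2(Z)), this becomes a group identity a z b = w, obtained by a
   case analysis in which commutation transitivity does the work.  For the bound, a word of
   Phi_k is determined by its at most k non-optimal edges, since optimal paths between two
   vertices are unique. *)

From Stdlib Require Import Classical.
From HB Require Import structures.
From mathcomp Require Import all_boot order ssralg ssrnum ssrint intdiv zify ring.
Set Implicit Arguments. Unset Strict Implicit. Unset Printing Implicit Defensive.
Import GRing.Theory.

(** * Commutation-transitive groups *)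

Definition commute_transitive (G : groupType) :=
  forall x y z : G, y != 1%g -> commute x y -> commute y z -> commute x z.

Lemma corner_dichotomy (T : eqType) (f : bool -> bool -> T) :
  (f false true = f false false /\ f true false = f false false) \/
  exists k1 k2, ~~ (k1 && k2) /\ f k1 k2 != f false false.
Proof.
have [a01|a01] := eqVneq (f false true) (f false false); last by right; exists false, true.
have [a10|a10] := eqVneq (f true false) (f false false); last by right; exists true, false.
by left.
Qed.

Section CubeCorner.
Local Open Scope group_scope.
Variables (G : groupType) (a b z w : bool -> bool -> G).
Hypothesis cube_eq : forall c1 c2 c3 c4,
  ~~ [&& c1, c2, c3 & c4] -> a c1 c2 * z c3 c4 * b c1 c2 = w c3 c4.
Arguments cube_eq : clear implicits.
Hypothesis a_shift : a false false = a true false -> a false true = a true true.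
Hypothesis b_shift : b false false = b true false -> b false true = b true true.
Hypothesis z_shift : z false false = z false true -> z true false = z true true.
(* The shift hypotheses hold when a c1 c2, b c1 c2 and z c3 c4 are sandwiches
   u * t * v whose middle factor depends on c1 (resp. c4) only. *)

Lemma cube_eq_b c1 c2 c3 c4 : ~~ (c1 && c2) ->
  b c1 c2 = (z c3 c4)^-1 * (a c1 c2)^-1 * w c3 c4.
Proof.
move=> c12; rewrite -(cube_eq c1 c2 c3 c4); last by case: c1 c2 c12 => [] [].
by rewrite -!mulgA !mulKg.
Qed.
Arguments cube_eq_b : clear implicits.

Lemma cube_corner_a_const :
  a false true = a false false -> a true false = a false false ->
  a true true * z true true * b true true = w true true.
Proof.
move=> a01 a10.
have b_const c1 c2 : ~~ (c1 && c2) -> b c1 c2 = b false false.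
  move=> c12; rewrite (cube_eq_b c1 c2 false false c12) (cube_eq_b false false false false) //.
  by case: c1 c2 c12 => [] [] //= _; rewrite ?a01 ?a10.
rewrite -(a_shift (esym a10)) a01 -(b_shift _) ?b_const //.
exact: cube_eq false false true true isT.
Qed.

Lemma cube_corner_z_const :
  z false true = z false false -> z true false = z false false ->
  a true true * z true true * b true true = w true true.
Proof.
move=> z01 z10; rewrite -(z_shift (esym z01)) (cube_eq true true true false) //.
by rewrite -(cube_eq false false true false) // -(cube_eq false false true true) // -z_shift.
Qed.

Lemma cube_corner_nonconst k1 k2 j1 j2 : commute_transitive G ->
  ~~ (k1 && k2) -> a k1 k2 != a false false ->
  ~~ (j1 && j2) -> z j1 j2 != z false false ->
  a true true * z true true * b true true = w true true.
Proof.
(* gamma commutes with every z l1 l2 / z false false, and delta with every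
   (a false false)^-1 * a c1 c2; transitivity of commutation through delta and then gamma
   makes C commute with D, and C D C^-1 = D is the missing equation. *)
move=> ctG k12 ak j12 zj.
set gamma := (a false false)^-1 * a k1 k2; set delta := z j1 j2 / z false false.
have gamma1 : gamma != 1.
  by apply: contra ak => /eqP g1; rewrite -(mulVKg (a false false) (a k1 k2)) -/gamma g1 mulg1.
have delta1 : delta != 1.
  by apply: contra zj => /eqP d1; rewrite -(mulgVK (z false false) (z j1 j2)) -/delta d1 mul1g.
have gamma_z l1 l2 : commute gamma (z l1 l2 / z false false).
  pose beta := b false false / b k1 k2.
  have gammaE l3 l4 : gamma * z l3 l4 = z l3 l4 * beta.
    rewrite /gamma /beta (cube_eq_b k1 k2 l3 l4 k12) (cube_eq_b false false l3 l4) //.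
    by rewrite !invgM !invgK !mulgA !mulgK mulgV mul1g.
  have gammaD : gamma = z false false * beta / z false false by rewrite -gammaE mulgK.
  by rewrite /commute mulgA gammaE [in RHS]gammaD !mulgA mulgVK.
have delta_a c1 c2 : commute ((a false false)^-1 * a c1 c2) delta.
  have conj_delta c3 c4 : a c3 c4 * delta / a c3 c4 = w j1 j2 / w false false.
    rewrite -(cube_eq c3 c4 j1 j2); last by apply: contra j12 => /and4P[_ _ -> ->].
    rewrite -(cube_eq c3 c4 false false) ?andbF //.
    by rewrite /delta !invgM !mulgA mulgK.
  have e := conj_delta c1 c2; rewrite -(conj_delta false false) in e.
  rewrite /commute -!mulgA; apply: (mulgI (a false false)); rewrite mulVKg.
  by apply: (mulIg (a c1 c2)^-1); rewrite e !mulgA mulgK.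
set C := (a false false)^-1 * a true true; set D := z true true / z false false.
have CD : commute C D.
  apply: (ctG _ gamma) => //; last exact: gamma_z.
  apply: (ctG _ delta) => //; first exact: delta_a.
  exact/commute_sym/delta_a.
have b11 : b true true = (z false false)^-1 * C^-1 * z false false * b false false.
  apply: (mulgI (a true true * z false false)).
  rewrite !mulgA (cube_eq true true false false) // -(cube_eq false false false false) //.
  by rewrite mulgK /C invgM invgK !mulgA mulgV mul1g.
have zD : D * z false false = z true true by rewrite mulgVK.
rewrite b11 -(mulVKg (a false false) (a true true)) -/C -zD; clearbody C D.
rewrite !mulgA mulgK -(mulgA _ C D) CD mulgA mulgK -(mulgA _ D) zD.
exact: cube_eq false false true true isT.
Qed.

Lemma cube_corner : commute_transitive G ->
  a true true * z true true * b true true = w true true.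
Proof.
move=> ctG; have [[a01 a10]|[k1 [k2 [k12 ak]]]] := corner_dichotomy a.
  exact: cube_corner_a_const.
have [[z01 z10]|[j1 [j2 [j12 zj]]]] := corner_dichotomy z.
  exact: cube_corner_z_const.
exact: cube_corner_nonconst ctG k12 ak j12 zj.
Qed.

End CubeCorner.

Definition wrap (T : Type) (x : seq T * seq T) (u : seq T) := x.1 ++ u ++ x.2.

Definition cube_word (T : Type) (x1 x2 x3 x4 : bool -> seq T * seq T) (m : seq T)
    c1 c2 c3 c4 :=
  wrap (x1 c1) (wrap (x2 c2) (wrap (x3 c3) (wrap (x4 c4) m))).

Section MorphCube.
Local Open Scope group_scope.
Variables (G : groupType) (T : Type) (F1 F2 : seq T -> G).
Hypotheses (G_ct : commute_transitive G)
  (F1_cat : {morph F1 : u v / u ++ v >-> u * v})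
  (F2_cat : {morph F2 : u v / u ++ v >-> u * v}).

Lemma mulg_sandwich_eq (x x' y y' z z' : G) :
  x * z * y = x' * z' * y' <-> x'^-1 * x * z * (y / y') = z'.
Proof.
have -> : x'^-1 * x * z * (y / y') = x'^-1 * (x * z * y) / y' by rewrite !mulgA.
by split=> [->|<-]; rewrite -!mulgA ?mulKg ?mulVKg ?mulgV ?mulVg ?mulg1.
Qed.

Lemma sandwich_shift (u u' t t' v v' : G) :
  u * t * v = u * t' * v -> u' * t * v' = u' * t' * v'.
Proof. by move/mulIg/mulgI ->. Qed.

Lemma morph_sandwich_eq l u r :
  F1 (l ++ u ++ r) = F2 (l ++ u ++ r) <-> (F2 l)^-1 * F1 l * F1 u * (F1 r / F2 r) = F2 u.
Proof. by rewrite !F1_cat !F2_cat (mulgA (F1 l)) (mulgA (F2 l)); exact: mulg_sandwich_eq. Qed.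

Lemma morph_cube_corner x1 x2 x3 x4 m :
  let W := cube_word x1 x2 x3 x4 m in
  (forall c1 c2 c3 c4, ~~ [&& c1, c2, c3 & c4] -> F1 (W c1 c2 c3 c4) = F2 (W c1 c2 c3 c4)) ->
  F1 (W true true true true) = F2 (W true true true true).
Proof.
move=> W eq15.
pose a c1 c2 := (F2 ((x1 c1).1 ++ (x2 c2).1))^-1 * F1 ((x1 c1).1 ++ (x2 c2).1).
pose b c1 c2 := F1 ((x2 c2).2 ++ (x1 c1).2) / F2 ((x2 c2).2 ++ (x1 c1).2).
pose z c3 c4 := F1 (wrap (x3 c3) (wrap (x4 c4) m)).
pose w c3 c4 := F2 (wrap (x3 c3) (wrap (x4 c4) m)).
have eqE c1 c2 c3 c4 :
    F1 (W c1 c2 c3 c4) = F2 (W c1 c2 c3 c4) <-> a c1 c2 * z c3 c4 * b c1 c2 = w c3 c4.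
  have -> : W c1 c2 c3 c4 = ((x1 c1).1 ++ (x2 c2).1) ++ wrap (x3 c3) (wrap (x4 c4) m) ++
                            ((x2 c2).2 ++ (x1 c1).2) by rewrite /W /cube_word /wrap -!catA.
  exact: morph_sandwich_eq.
apply/eqE; apply: (cube_corner (a := a) (b := b) (z := z) (w := w)) => //.
- by move=> c1 c2 c3 c4 /eq15/eqE.
- have aE c1 c2 : a c1 c2 =
      (F2 (x2 c2).1)^-1 * ((F2 (x1 c1).1)^-1 * F1 (x1 c1).1) * F1 (x2 c2).1.
    by rewrite /a F1_cat F2_cat invgM !mulgA.
  by rewrite !aE; apply: sandwich_shift.
- have bE c1 c2 : b c1 c2 =
      F1 (x2 c2).2 * (F1 (x1 c1).2 / F2 (x1 c1).2) * (F2 (x2 c2).2)^-1.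
    by rewrite /b F1_cat F2_cat invgM !mulgA.
  by rewrite !bE; apply: sandwich_shift.
- have zE c3 c4 : z c3 c4 = F1 (x3 c3).1 * F1 (wrap (x4 c4) m) * F1 (x3 c3).2.
    by rewrite /z /wrap !F1_cat !mulgA.
  by rewrite !zE; apply: sandwich_shift.
Qed.

End MorphCube.

(** * A commutation-transitive group containing a free monoid *)

Local Open Scope ring_scope.

Record mx2 := Mx2 { m11 : int; m12 : int; m21 : int; m22 : int }.
Definition mx2_tuple x := (m11 x, m12 x, m21 x, m22 x).
Definition tuple_mx2 (t : int * int * int * int) := let: (a, b, c, d) := t in Mx2 a b c d.
Lemma mx2_tupleK : cancel mx2_tuple tuple_mx2. Proof. by case. Qed.
HB.instance Definition _ := Countable.copy mx2 (can_type mx2_tupleK).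

Definition mx2_one := Mx2 1 0 0 1.
Definition mx2_mul x y := Mx2
  (m11 x * m11 y + m12 x * m21 y) (m11 x * m12 y + m12 x * m22 y)
  (m21 x * m11 y + m22 x * m21 y) (m21 x * m12 y + m22 x * m22 y).
Definition mx2_adj x := Mx2 (m22 x) (- m12 x) (- m21 x) (m11 x).
Definition mx2_det x := m11 x * m22 x - m12 x * m21 x.

Lemma mx2_mulA : associative mx2_mul.
Proof. by case=> [a b c d] [a1 b1 c1 d1] [a2 b2 c2 d2]; congr Mx2; rewrite /=; ring. Qed.
Lemma mx2_mul1l : left_id mx2_one mx2_mul.
Proof. by case=> a b c d; congr Mx2; rewrite /=; ring. Qed.
Lemma mx2_mul1r : right_id mx2_one mx2_mul.
Proof. by case=> a b c d; congr Mx2; rewrite /=; ring. Qed.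
Lemma mx2_adj_mul x : mx2_det x = 1 -> mx2_mul (mx2_adj x) x = mx2_one.
Proof. case: x => [a b c d]; rewrite /mx2_det /= => det1; congr Mx2; rewrite /= -?det1; ring. Qed.
Lemma mx2_mul_adj x : mx2_det x = 1 -> mx2_mul x (mx2_adj x) = mx2_one.
Proof. case: x => [a b c d]; rewrite /mx2_det /= => det1; congr Mx2; rewrite /= -?det1; ring. Qed.

(* The congruence conditions exclude -1, the only non-trivial scalar matrix of SL2(Z),
   which is what makes commutation transitive (sl2c_commute_transitive). *)
Definition sl2_cong x := [&& mx2_det x == 1, (4 %| m11 x - 1%R)%Z,
  (4 %| m22 x - 1%R)%Z, (2 %| m12 x)%Z & (2 %| m21 x)%Z].

Lemma sl2_cong1 : sl2_cong mx2_one. Proof. by []. Qed.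

Lemma sl2_cong_adj x : sl2_cong x -> sl2_cong (mx2_adj x).
Proof.
case: x => [a b c d]; rewrite /sl2_cong /mx2_det /=.
case/and5P => det1 h2 h3 h4 h5; by rewrite !rpredN h2 h3 h4 h5 mulrNN mulrC det1.
Qed.

Lemma sl2_cong_mul x y : sl2_cong x -> sl2_cong y -> sl2_cong (mx2_mul x y).
Proof.
case: x y => [a b c d] [a' b' c' d']; rewrite /sl2_cong /mx2_det /=.
case/and5P => /eqP h1 h2 h3 h4 h5; case/and5P => /eqP h1' h2' h3' h4' h5'.
have h4c : (4 %| b * c')%Z by apply: (@dvdz_mul 2 2).
have h4c' : (4 %| c * b')%Z by apply: (@dvdz_mul 2 2).
apply/and5P; split.
- apply/eqP; have -> : (a * a' + b * c') * (c * b' + d * d') - (a * b' + b * d') * (c * a' + d * c')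
                   = (a * d - b * c) * (a' * d' - b' * c') by ring.
  by rewrite h1 h1' mulr1.
- have -> : a * a' + b * c' - 1 = (a - 1) * (a' - 1) + (a - 1) + (a' - 1) + b * c' by ring.
  by do 3 apply: rpredD => //; exact: dvdz_mulr.
- have -> : c * b' + d * d' - 1 = (d - 1) * (d' - 1) + (d - 1) + (d' - 1) + c * b' by ring.
  by do 3 apply: rpredD => //; exact: dvdz_mulr.
- by apply: rpredD; [exact: dvdz_mull | exact: dvdz_mulr].
- by apply: rpredD; [exact: dvdz_mulr | exact: dvdz_mull].
Qed.

Definition sl2c := {x : mx2 | sl2_cong x}.
HB.instance Definition _ := Choice.on sl2c.

Definition sl2c_one : sl2c := exist _ mx2_one sl2_cong1.
Definition sl2c_mul (x y : sl2c) : sl2c :=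
  exist _ (mx2_mul (val x) (val y)) (sl2_cong_mul (valP x) (valP y)).
Definition sl2c_inv (x : sl2c) : sl2c := exist _ (mx2_adj (val x)) (sl2_cong_adj (valP x)).

Lemma sl2c_det (x : sl2c) : mx2_det (val x) = 1.
Proof. by case/and5P: (valP x) => /eqP. Qed.

Lemma sl2c_mulA : associative sl2c_mul.
Proof. by move=> x y z; apply: val_inj; apply: mx2_mulA. Qed.
Lemma sl2c_mul1l : left_id sl2c_one sl2c_mul.
Proof. by move=> x; apply: val_inj; apply: mx2_mul1l. Qed.
Lemma sl2c_mul1r : right_id sl2c_one sl2c_mul.
Proof. by move=> x; apply: val_inj; apply: mx2_mul1r. Qed.
Lemma sl2c_mulVl : left_inverse sl2c_one sl2c_inv sl2c_mul.
Proof. by move=> x; apply: val_inj; apply/mx2_adj_mul/sl2c_det. Qed.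
Lemma sl2c_mulVr : right_inverse sl2c_one sl2c_inv sl2c_mul.
Proof. by move=> x; apply: val_inj; apply/mx2_mul_adj/sl2c_det. Qed.

HB.instance Definition _ := isGroup.Build sl2c
  sl2c_mulA sl2c_mul1l sl2c_mul1r sl2c_mulVl sl2c_mulVr.

Definition parallel (R : nzRingType) (I : Type) (u v : I -> R) :=
  forall i j, u i * v j = u j * v i.

Lemma parallel_trans (R : idomainType) (I : Type) (u v w : I -> R) k :
  v k != 0 -> parallel u v -> parallel v w -> parallel u w.
Proof.
move=> vk uv vw i j; apply: (mulfI (mulf_neq0 vk vk)).
have uE l : v k * u l = u k * v l by rewrite mulrC uv.
have wE l : v k * w l = w k * v l by rewrite vw mulrC.
transitivity ((v k * u i) * (v k * w j)); first by ring.
transitivity ((v k * u j) * (v k * w i)); last by ring.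
by rewrite !uE !wE; ring.
Qed.

Definition mx2_vec x (i : 'I_3) : int := [:: m12 x; m21 x; m11 x - m22 x]`_i.

Lemma mx2_commuteP x y :
  mx2_mul x y = mx2_mul y x <-> parallel (mx2_vec x) (mx2_vec y).
Proof.
case: x y => [p q r s] [a b c d]; split.
  move=> /(congr1 (fun m => (m11 m, m12 m, m21 m))) [e11 e12 e21] i j.
  by case: i j => [[|[|[|//]]] ?] [[|[|[|//]]] ?]; rewrite /mx2_vec /=; lia.
move=> par; have := par ord0 (@Ordinal 3 1 isT); have := par ord0 (@Ordinal 3 2 isT).
have := par (@Ordinal 3 1 isT) (@Ordinal 3 2 isT); rewrite /mx2_vec /= => h12 h02 h01.
by congr Mx2 => /=; lia.
Qed.

Lemma sl2c_commuteP (x y : sl2c) :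
  commute x y <-> parallel (mx2_vec (val x)) (mx2_vec (val y)).
Proof.
rewrite -mx2_commuteP; split => [/(congr1 val) // | xy].
exact: val_inj.
Qed.

Lemma sl2c_nonscalar (y : sl2c) : y != 1%g -> exists k, mx2_vec (val y) k != 0.
Proof.
move=> y1; apply/existsP; apply: contraNT y1; rewrite negb_exists => /forallP v0; apply/eqP/val_inj.
case: y v0 => [[a b c d] /= /and5P[/eqP det1 /dvdzP[k ak] _ _ _]] v0.
move: (v0 ord0) (v0 (@Ordinal 3 1 isT)) (v0 (@Ordinal 3 2 isT)).
rewrite /mx2_vec /= !negbK => /eqP b0 /eqP c0 /eqP ad.
rewrite /mx2_det /= b0 c0 in det1 ak.
have : k * (2 * k + 1) == 0 by apply/eqP; nia.
rewrite mulf_eq0 => /orP[/eqP k0|/eqP]; last by lia.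
by congr Mx2; rewrite /mx2_one //=; lia.
Qed.

Lemma sl2c_commute_transitive : commute_transitive sl2c.
Proof.
move=> x y z /sl2c_nonscalar[k yk] /sl2c_commuteP xy /sl2c_commuteP yz.
exact/sl2c_commuteP/(parallel_trans yk xy yz).
Qed.

Section FreeMonoidEmbedding.
Local Open Scope group_scope.

(* The generators of Sanov's free subgroup of SL2(Z). *)
Definition bit_mx (b : bool) : sl2c :=
  if b then exist _ (Mx2 1 2 0 1) isT else exist _ (Mx2 1 0 2 1) isT.

Definition bits_mx (s : seq bool) : sl2c := \prod_(b <- s) bit_mx b.

Lemma bits_mx_nil : bits_mx [::] = 1.
Proof. exact: big_nil. Qed.

Lemma bits_mx_cat s t : bits_mx (s ++ t) = bits_mx s * bits_mx t.
Proof. exact: big_cat. Qed.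

Lemma bits_mx_rcons s b : bits_mx (rcons s b) = bits_mx s * bit_mx b.
Proof. by rewrite -cats1 bits_mx_cat /bits_mx big_seq1. Qed.

Definition mx2_nonneg x := [&& 0 <= m11 x, 0 <= m12 x, 0 <= m21 x & 0 <= m22 x]%R.

Lemma bit_mx_mul_nonneg b x : mx2_nonneg (val x) -> mx2_nonneg (val (bit_mx b * x)).
Proof.
case: x => [[p q r t] xP]; rewrite /mx2_nonneg /= => /and4P[p0 q0 r0 t0].
by case: b => /=; apply/and4P; split; lia.
Qed.

Lemma bits_mx_nonneg s : mx2_nonneg (val (bits_mx s)).
Proof.
elim: s => [|b s IH]; first by rewrite /bits_mx big_nil.
by rewrite /bits_mx big_cons; apply: bit_mx_mul_nonneg.
Qed.

(* Right multiplication by bit_mx true adds twice the first column to the second, and by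
   bit_mx false the second to the first; with nonnegative entries and determinant 1 this
   tells which factor came last. *)
Definition col_le x := (m11 x <= m12 x) && (m21 x <= m22 x).
Definition col_ge x := (m12 x <= m11 x) && (m22 x <= m21 x).

Lemma bits_mx_rcons_cols s b :
  col_le (val (bits_mx (rcons s b))) = b /\ col_ge (val (bits_mx (rcons s b))) = ~~ b.
Proof.
rewrite bits_mx_rcons; have := bits_mx_nonneg s; have := sl2c_det (bits_mx s).
case: (bits_mx s) => [[p q r t] xP]; rewrite /mx2_nonneg /mx2_det /col_le /col_ge /=.
move=> det1 /and4P[p0 q0 r0 t0].
case: b => /=; split; apply/idP; (apply/andP; split; lia) || (case/andP; nia).
Qed.

Lemma bits_mx_rcons_neq1 s b : bits_mx (rcons s b) != 1.
Proof.
have [] := bits_mx_rcons_cols s b.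
by case: eqP => [->|//]; case: b.
Qed.

Lemma bits_mx_inj : injective bits_mx.
Proof.
elim/last_ind => [|s b IH] t.
  by case/lastP: t => // t b e; have := bits_mx_rcons_neq1 t b; rewrite -e bits_mx_nil eqxx.
case/lastP: t => [|t c] e.
  by have := bits_mx_rcons_neq1 s b; rewrite e bits_mx_nil eqxx.
have [bE _] := bits_mx_rcons_cols s b; have [cE _] := bits_mx_rcons_cols t c.
have bc : b = c by rewrite -bE -cE e.
by move: e; rewrite bc !bits_mx_rcons => /mulIg/IH ->.
Qed.

Lemma nseq_true_false_inj i j s t :
  nseq i true ++ false :: s = nseq j true ++ false :: t -> i = j /\ s = t.
Proof. by elim: i j => [|i IH] [|j] //= [] // /IH[-> ->]. Qed.

Definition unary_code (T : countType) (a : T) : seq bool :=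
  rcons (nseq (pickle a) true) false.

Lemma flatten_unary_code_inj (T : countType) :
  injective (fun w : seq T => flatten (map (@unary_code T) w)).
Proof.
elim=> [|a u IH] [|b v] //=; rewrite /unary_code -?cats1 -?catA //=.
- by case: (pickle b).
- by case: (pickle a).
by move=> /nseq_true_false_inj[/(pcan_inj pickleK) -> /IH ->].
Qed.

Definition word_mx (T : countType) (w : seq T) : sl2c :=
  bits_mx (flatten (map (@unary_code T) w)).

Lemma word_mx_cat (T : countType) : {morph @word_mx T : u v / u ++ v >-> u * v}.
Proof. by move=> u v; rewrite /word_mx map_cat flatten_cat bits_mx_cat. Qed.

Lemma word_mx_inj (T : countType) : injective (@word_mx T).
Proof. by move=> u v /bits_mx_inj/flatten_unary_code_inj. Qed.

End FreeMonoidEmbedding.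

Local Close Scope ring_scope.

Lemma morph_cat (S T : Type) (h : S -> seq T) : {morph morph h : u v / u ++ v}.
Proof. by move=> u v; rewrite /morph map_cat flatten_cat. Qed.

Lemma morph_cube_corner_eq (S : Type) (T : countType) (f g : S -> seq T) x1 x2 x3 x4 m :
  let W := cube_word x1 x2 x3 x4 m in
  (forall c1 c2 c3 c4, ~~ [&& c1, c2, c3 & c4] ->
     morph f (W c1 c2 c3 c4) = morph g (W c1 c2 c3 c4)) ->
  morph f (W true true true true) = morph g (W true true true true).
Proof.
move=> W eq15; apply: (@word_mx_inj T).
have hom (h : S -> seq T) : {morph (fun u => word_mx (morph h u)) : u v / u ++ v >-> (u * v)%g}.
  by move=> u v /=; rewrite morph_cat word_mx_cat.
apply: (morph_cube_corner sl2c_commute_transitive (hom f) (hom g)).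
by move=> c1 c2 c3 c4 /eq15 /= ->.
Qed.

(** * Paths in the graph of a linear grammar *)

Lemma lexlt_catl (c s t : seq nat) : lexlt (c ++ s) (c ++ t) = lexlt s t.
Proof. by elim: c => //= a c ->; rewrite ltnn eqxx. Qed.

Lemma lexlt_catr (s t u v : seq nat) :
  size s = size t -> lexlt s t -> lexlt (s ++ u) (t ++ v).
Proof.
elim: s t => [|a s IH] [|b t] //= [sz] /orP[->//|/andP[ab lt_st]].
by rewrite ab IH ?orbT.
Qed.

Lemma lexlt_total (s t : seq nat) :
  size s = size t -> s != t -> lexlt s t || lexlt t s.
Proof.
elim: s t => [|a s IH] [|b t] //= [sz]; rewrite eqseq_cons negb_and.
by case: (ltngtP a b) => //= _; exact: IH.
Qed.

Fixpoint lex_rank (B : nat) (s : seq nat) : nat :=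
  if s is a :: s' then a * B ^ size s' + lex_rank B s' else 0.

Lemma lex_rank_lt B s : all (fun a => a < B) s -> lex_rank B s < B ^ size s.
Proof.
elim: s => [|a s IH] /=; first by rewrite expn0.
case/andP => aB /IH sB; rewrite expnS.
apply: (@leq_trans (a.+1 * B ^ size s)); first by rewrite mulSn addnC ltn_add2r.
by rewrite leq_mul2r aB orbT.
Qed.

Lemma lexlt_rank B s t : size s = size t ->
  all (fun a => a < B) s -> all (fun a => a < B) t ->
  lexlt s t -> lex_rank B s < lex_rank B t.
Proof.
elim: s t => [|a s IH] [|b t] //= [sz] /andP[aB sB] /andP[bB tB].
case/orP => [ab|/andP[/eqP <- lt_st]]; last by rewrite sz ltn_add2l IH.
apply: (@leq_trans (a.+1 * B ^ size t)).
  by rewrite -sz mulSn [B ^ _ + _]addnC ltn_add2l lex_rank_lt.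
by rewrite (leq_trans _ (leq_addr _ _)) // leq_mul2r ab orbT.
Qed.

Section Paths.
Variables (N Sigma : eqType) (rules : seq (rule N Sigma)).
Implicit Types (p q : seq (rule N Sigma)) (x y z : option N).

Local Notation path_lt := (path_lt rules).
Local Notation optimal := (optimal rules).
Local Notation is_path := (is_path rules).

Definition path_lword p := flatten (map (@lword N Sigma) p).
Definition path_rword p := flatten (rev (map (@rword N Sigma) p)).

Lemma path_word_cat p q :
  path_word (p ++ q) = wrap (path_lword p, path_rword p) (path_word q).
Proof.
by rewrite /path_word /wrap /path_lword /path_rword !map_cat rev_cat !flatten_cat /= !catA.
Qed.

Definition path_target x p := last x (map (@tgt N Sigma) p).

Lemma is_path_cat x p q y :
  is_path x (p ++ q) y =
  is_path x p (path_target x p) && is_path (path_target x p) q y.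
Proof. by elim: p x => [|r p IH] x /=; rewrite ?eqxx // IH !andbA. Qed.

Lemma is_path_target x p y : is_path x p y -> y = path_target x p.
Proof. by elim: p x => [|r p IH] x /= => [/eqP|/and3P[_ _ /IH]]. Qed.

Lemma is_path_catP x z y p q :
  is_path x p z -> is_path z q y -> is_path x (p ++ q) y.
Proof. by move=> xz zy; rewrite is_path_cat -(is_path_target xz) xz zy. Qed.

Lemma is_path_source x r p y : is_path x (r :: p) y -> x = Some (lhs r).
Proof. by case/and3P => _ /eqP. Qed.

Lemma is_path_rules x p y : is_path x p y -> {subset p <= rules}.
Proof.
elim: p x => [|r p IH] x //= /and3P[r_rules _ /IH p_rules] s.
by rewrite inE => /predU1P[->|/p_rules].
Qed.

Lemma langP S w :
  lang rules S w <-> exists p, is_path (Some S) p None /\ path_word p = w.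
Proof.
have wordE A u B v p : path_word ((A, inl (u, B, v)) :: p) = u ++ path_word p ++ v.
  by rewrite /path_word /= rev_cons -cats1 flatten_cat /= cats0 -!catA.
have word1 A u : path_word [:: (A, inr u)] = u by rewrite /path_word /= !cats0.
split.
  elim=> {w} [A u Au|A u B v w ABv _ [p [Bp <-]]].
    by exists [:: (A, inr u)]; rewrite /= Au eqxx word1.
  by exists ((A, inl (u, B, v)) :: p); rewrite /= ABv eqxx wordE.
case=> p [+ <-]; elim: p S => [//|[A [[[u B] v]|u]] p IH] S /= /and3P[Ar /eqP[->]].
  by move=> /IH Bp; rewrite wordE; apply: der_nt Bp.
by case: p {IH} => [_|? ? /and3P[]//]; rewrite word1; exact: der_term.
Qed.

Definition path_le p q := (p == q) || path_lt p q.

Lemma path_le_refl p : path_le p p.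
Proof. by rewrite /path_le eqxx. Qed.

Lemma path_lt_size p q : path_lt p q -> size p <= size q.
Proof. by case/orP => [/ltnW|/andP[/eqP->]]. Qed.

Lemma path_le_size p q : path_le p q -> size p <= size q.
Proof. by case/orP => [/eqP->|/path_lt_size]. Qed.

Lemma path_lt_nil p : path_lt p [::] = false.
Proof. by rewrite /path_lt ltn0; case: p. Qed.

Lemma path_lt_catl p p' q q' :
  path_lt p p' -> path_le q q' -> path_lt (p ++ q) (p' ++ q').
Proof.
move=> lt_p /path_le_size le_q; rewrite /path_lt !size_cat.
case/orP: lt_p => [lt_sz|/andP[/eqP eq_sz lt_lex]].
  by rewrite (leq_trans (leq_add lt_sz le_q)).
rewrite eq_sz ltn_add2l eqn_add2l !map_cat.
by case: ltngtP le_q => //= eq_sz' _; rewrite lexlt_catr ?size_map ?orbT.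
Qed.

Lemma path_lt_catr p p' q q' :
  path_le p p' -> path_lt q q' -> path_lt (p ++ q) (p' ++ q').
Proof.
case/orP => [/eqP <-|lt_p] lt_q; last by apply: path_lt_catl lt_p _; rewrite /path_le lt_q orbT.
by rewrite /path_lt !size_cat ltn_add2l eqn_add2l !map_cat lexlt_catl.
Qed.

Lemma path_le_cat p p' q q' :
  path_le p p' -> path_le q q' -> path_le (p ++ q) (p' ++ q').
Proof.
case/orP => [/eqP <-|lt_p] le_q; last by rewrite /path_le path_lt_catl ?orbT.
case/orP: le_q => [/eqP <-|lt_q]; first exact: path_le_refl.
by rewrite /path_le path_lt_catr ?orbT ?path_le_refl.
Qed.

Definition path_below (strict : bool) p q := if strict then path_lt p q else path_le p q.

Lemma path_below_cat_if (c b : bool) p q r r' : path_lt p q -> path_below b r r' ->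
  path_below (~~ c || b) ((if c then q else p) ++ r) (q ++ r').
Proof.
have le_below b' u v : path_below b' u v -> path_le u v.
  by case: b' => //= lt_uv; rewrite /path_le lt_uv orbT.
case: c => /= lt_pq below_r; last exact: path_lt_catl lt_pq (le_below _ _ _ below_r).
case: b below_r => /= [|le_r]; last exact: path_le_cat (path_le_refl q) le_r.
exact: path_lt_catr (path_le_refl q).
Qed.

(* Rule positions are at most size rules, so in base (size rules).+2 >= 2 the order on
   paths becomes the order on numbers. *)
Definition path_rank p :=
  let B := (size rules).+2 in B ^ size p + lex_rank B (map (index^~ rules) p).

Lemma path_lt_rank p q : path_lt q p -> path_rank q < path_rank p.
Proof.
have idx_lt r : all (fun a => a < (size rules).+2) (map (index^~ rules) r).
  by apply/allP => _ /mapP[s _ ->]; rewrite ltnS (leq_trans (index_size _ _)).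
rewrite /path_rank; set B := (size rules).+2.
case/orP => [lt_sz|/andP[/eqP eq_sz lt_lex]]; last first.
  by rewrite eq_sz ltn_add2l lexlt_rank ?size_map.
apply: (@leq_trans (B ^ (size q).+1)); last first.
  by rewrite (leq_trans _ (leq_addr _ _)) // leq_exp2l.
have := lex_rank_lt (idx_lt q); rewrite size_map expnS => lt_rank.
by rewrite (@leq_trans (B ^ size q + B ^ size q)) ?ltn_add2l // addnn -mul2n leq_mul2r orbT.
Qed.

Lemma path_lt_ind (P : seq (rule N Sigma) -> Prop) :
  (forall p, (forall q, path_lt q p -> P q) -> P p) -> forall p, P p.
Proof.
move=> IH p; move: {2}(path_rank p) (erefl (path_rank p)) => n.
elim/ltn_ind: n p => n IHn p pn; apply: IH => q /path_lt_rank; rewrite pn => /IHn; exact.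
Qed.

Lemma optimal_nil : optimal [::].
Proof. by exists None, None; split=> // q _; rewrite path_lt_nil. Qed.

Lemma optimal_min x y p q :
  optimal p -> is_path x p y -> is_path x q y -> ~~ path_lt q p.
Proof.
case: p => [_ _ _|r p [x' [y' [p' min_p]]] xp]; first by rewrite path_lt_nil.
have xx' : x = x' by rewrite (is_path_source xp) (is_path_source p').
have yy' : y = y' by rewrite (is_path_target xp) (is_path_target p') xx'.
by rewrite xx' yy'; exact: min_p.
Qed.

Lemma path_lt_total p q :
  {subset p <= rules} -> {subset q <= rules} -> p != q -> path_lt p q || path_lt q p.
Proof.
move=> p_rules q_rules pq; rewrite /path_lt.
case: ltngtP => //= sz; apply: lexlt_total; rewrite ?size_map //.
have idx_inj : {in rules &, injective (index^~ rules)}.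
  by move=> r s rR sR /= e; rewrite -(nth_index r rR) e nth_index.
apply: contra pq => /eqP/(inj_in_map idx_inj) eq_pq.
by rewrite eq_pq //; apply/allP.
Qed.

Lemma optimal_uniq x y p q : optimal p -> optimal q ->
  is_path x p y -> is_path x q y -> p = q.
Proof.
move=> opt_p opt_q xp xq; apply/eqP/negPn/negP => pq.
have := path_lt_total (is_path_rules xp) (is_path_rules xq) pq.
by rewrite (negbTE (optimal_min opt_p xp xq)) (negbTE (optimal_min opt_q xq xp)).
Qed.

Lemma nonoptimal_shortcut x p y :
  ~ optimal p -> is_path x p y -> exists2 q, is_path x q y & path_lt q p.
Proof.
move=> not_opt xp; apply: NNPP => no_q; apply: not_opt; exists x, y; split=> // q xq.
by apply/negP => lt_q; apply: no_q; exists q.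
Qed.

Lemma optimal_or_break p : optimal p \/
  exists P e Q, [/\ p = P ++ e :: Q, optimal P & ~ optimal (rcons P e)].
Proof.
elim/last_ind: p => [|p e [opt_p|[P [e' [Q [-> opt_P not_opt]]]]]].
- by left; exact: optimal_nil.
- have [|not_opt] := classic (optimal (rcons p e)); first by left.
  by right; exists p, e, [::]; rewrite cats1.
- by right; exists P, e', (rcons Q e); rewrite rcons_cat.
Qed.

Fixpoint nonoptimal_blocks n p : Prop :=
  if n is n'.+1 then exists X R, [/\ p = X ++ R, ~ optimal X & nonoptimal_blocks n' R]
  else True.

Lemma decomp_or_blocks k p : decomp rules k p \/ nonoptimal_blocks k.+1 p.
Proof.
elim: k p => [|k IH] p; have [opt_p|[P [e [Q [-> opt_P not_opt]]]]] := optimal_or_break p;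
  try by left; constructor.
- by right; exists (rcons P e), Q; rewrite cat_rcons.
- have [dec_Q|blocks_Q] := IH Q; first by left; constructor.
  by right; exists (rcons P e), Q; rewrite cat_rcons.
Qed.

Inductive edge_decomp : option N -> seq (rule N Sigma) -> seq (rule N Sigma) -> Prop :=
| EdgeDecompLast x P : optimal P -> is_path x P None -> edge_decomp x [::] P
| EdgeDecompCons x P e es Q : optimal P -> is_path x P (Some (lhs e)) -> e \in rules ->
    edge_decomp (tgt e) es Q -> edge_decomp x (e :: es) (P ++ e :: Q).

Lemma decomp_edge_decomp k p x : decomp rules k p -> is_path x p None ->
  exists2 es, size es <= k & edge_decomp x es p.
Proof.
move=> dec_p; elim: dec_p x => {k p} [k P opt_P|k P e Q opt_P _ _ IH] x xp.
  by exists [::] => //; constructor.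
move: xp; rewrite is_path_cat => /andP[xP /= /and3P[e_rules /eqP tgt_P /IH[es sz_es dec_Q]]].
by exists (e :: es) => //; constructor; rewrite // -tgt_P.
Qed.

Lemma edge_decomp_rules x es p : edge_decomp x es p -> {subset es <= rules}.
Proof.
elim=> {x es p} // x P e es Q _ _ e_rules _ IH r.
by rewrite inE => /predU1P[->|/IH].
Qed.

Lemma edge_decomp_uniq x es p p' : edge_decomp x es p -> edge_decomp x es p' -> p = p'.
Proof.
move=> dec_p; elim: dec_p p' => {x es p} [x P opt_P xP|x P e es Q opt_P xP _ _ IH] p' dec_p'.
  by inversion dec_p' as [? P' opt_P' xP'|]; subst; exact: optimal_uniq xP xP'.
inversion dec_p' as [|? P' ? ? Q' opt_P' xP' _ dec_Q']; subst.
by rewrite (optimal_uniq opt_P opt_P' xP xP') (IH _ dec_Q').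
Qed.

End Paths.

Lemma Phi3_morph_path (N Sigma : eqType) (rules : seq (rule N Sigma)) (S : N)
    (T : countType) (f g : Sigma -> seq T) :
  (forall w, Phi rules S 3 w -> morph f w = morph g w) ->
  forall p, is_path rules (Some S) p None -> morph f (path_word p) = morph g (path_word p).
Proof.
move=> agree3; elim/(path_lt_ind (rules := rules)) => p IH Sp.
have [dec_p|blocks] := decomp_or_blocks rules 3 p; first by apply: agree3; exists p.
move: IH Sp; case: blocks =>
  X1 [_ [-> nX1 [X2 [_ [-> nX2 [X3 [_ [-> nX3 [X4 [R [-> nX4 _]]]]]]]]]]] IH.
rewrite !is_path_cat => /andP[p1 /andP[p2 /andP[p3 /andP[p4 pR]]]].
have [O1 q1 lt1] := nonoptimal_shortcut nX1 p1.
have [O2 q2 lt2] := nonoptimal_shortcut nX2 p2.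
have [O3 q3 lt3] := nonoptimal_shortcut nX3 p3.
have [O4 q4 lt4] := nonoptimal_shortcut nX4 p4.
pose pick (O X : seq (rule N Sigma)) (c : bool) := if c then X else O.
pose words (P : bool -> seq (rule N Sigma)) c := (path_lword (P c), path_rword (P c)).
pose P c1 c2 c3 c4 := pick O1 X1 c1 ++ pick O2 X2 c2 ++ pick O3 X3 c3 ++ pick O4 X4 c4 ++ R.
have wordE c1 c2 c3 c4 : path_word (P c1 c2 c3 c4) =
    cube_word (words (pick O1 X1)) (words (pick O2 X2)) (words (pick O3 X3))
              (words (pick O4 X4)) (path_word R) c1 c2 c3 c4.
  by rewrite !path_word_cat.
rewrite -[X1 ++ _]/(P true true true true) wordE; apply: morph_cube_corner_eq.
move=> c1 c2 c3 c4 not_all; rewrite -wordE; apply: IH.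
  have := path_below_cat_if c1 lt1 (path_below_cat_if c2 lt2 (path_below_cat_if c3 lt3
            (path_below_cat_if c4 lt4 (path_le_refl rules R : path_below rules false R R)))).
  by rewrite !orbF -!negb_and not_all.
apply: (is_path_catP (_ : is_path rules _ (pick O1 X1 c1) _)).
  by case: (c1); [exact: p1 | exact: q1].
apply: (is_path_catP (_ : is_path rules _ (pick O2 X2 c2) _)).
  by case: (c2); [exact: p2 | exact: q2].
apply: (is_path_catP (_ : is_path rules _ (pick O3 X3 c3) _)).
  by case: (c3); [exact: p3 | exact: q3].
by apply: (is_path_catP (_ : is_path rules _ (pick O4 X4 c4) _) pR); case: (c4).
Qed.

(** * Counting *)

Fixpoint seqs_of_size (T : Type) (s : seq T) n : seq (seq T) :=
  if n is n'.+1 then [seq x :: t | x <- s, t <- seqs_of_size s n'] else [:: [::]].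

Fixpoint seqs_upto (T : Type) (s : seq T) n : seq (seq T) :=
  if n is n'.+1 then seqs_upto s n' ++ seqs_of_size s n else [:: [::]].

Lemma size_seqs_of_size (T : Type) (s : seq T) n : size (seqs_of_size s n) = size s ^ n.
Proof. by elim: n => //= n IH; rewrite size_allpairs IH expnS. Qed.

Lemma size_seqs_upto (T : Type) (s : seq T) n :
  size (seqs_upto s n) = \sum_(i < n.+1) size s ^ i.
Proof.
elim: n => [|n IH]; first by rewrite big_ord_recr big_ord0.
by rewrite /= -/(seqs_of_size s n.+1) size_cat IH size_seqs_of_size [in RHS]big_ord_recr.
Qed.

Lemma mem_seqs_of_size (T : eqType) (s t : seq T) :
  {subset t <= s} -> t \in seqs_of_size s (size t).
Proof.
elim: t => //= x t IH ts; apply: (allpairs_f (fun y u => y :: u)); first by rewrite ts ?mem_head.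
by apply: IH => y yt; rewrite ts // inE yt orbT.
Qed.

Lemma mem_seqs_upto (T : eqType) (s t : seq T) n :
  {subset t <= s} -> size t <= n -> t \in seqs_upto s n.
Proof.
move=> ts; elim: n => [|n IH]; first by rewrite leqn0 => /nilP ->.
by rewrite leq_eqVlt mem_cat => /predU1P[<-|/IH ->]; rewrite ?mem_seqs_of_size ?orbT.
Qed.

Lemma functional_image_seq (T U : eqType) (R : T -> U -> Prop) (s : seq T) :
  (forall x y y', R x y -> R x y' -> y = y') ->
  exists2 ys : seq U, size ys <= size s & forall x y, x \in s -> R x y -> y \in ys.
Proof.
move=> R_fun; elim: s => [|x s [ys sz_ys ys_img]]; first by exists [::].
have [[y xy]|no_img] := classic (exists y, R x y).
  exists (y :: ys) => [|x' y']; first by rewrite ltnS.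
  rewrite !inE => /predU1P[-> /(R_fun _ _ _ xy) ->|x's /(ys_img _ _ x's) ->];
    by rewrite ?eqxx ?orbT.
exists ys => [|x' y']; first exact: leqW.
rewrite inE => /predU1P[-> xy|x's]; last exact: ys_img x's.
by case: no_img; exists y'.
Qed.

Lemma Phi3_test_set (N Sigma : eqType) (rules : seq (rule N Sigma)) (S : N) :
  test_set (lang rules S) (Phi rules S 3).
Proof.
split=> [w [p [Sp _ <-]]|Gamma f g agree3 w /langP[p [Sp <-]]].
  by apply/langP; exists p.
exact: Phi3_morph_path agree3 p Sp.
Qed.

Lemma Phi_size_bound (N Sigma : eqType) (rules : seq (rule N Sigma)) (S : N) k :
  exists ws : seq (seq Sigma),
    size ws <= \sum_(i < k.+1) (size rules) ^ i /\ forall w, Phi rules S k w -> w \in ws.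
Proof.
pose word_of es w := exists2 p, edge_decomp rules (Some S) es p & path_word p = w.
have word_of_fun es w w' : word_of es w -> word_of es w' -> w = w'.
  by move=> [p dec_p <-] [p' dec_p' <-]; rewrite (edge_decomp_uniq dec_p dec_p').
have [ws sz_ws ws_img] := functional_image_seq (seqs_upto rules k) word_of_fun.
exists ws; split=> [|w [p [Sp dec_p <-]]]; first by rewrite -size_seqs_upto.
have [es sz_es dec_es] := decomp_edge_decomp dec_p Sp.
by apply: (ws_img es); [exact: mem_seqs_upto (edge_decomp_rules dec_es) sz_es | exists p].
Qed.

Theorem mainTheorem2 (N Sigma : finType) (rules : seq (rule N Sigma)) (S : N) :
  uniq rules ->
  test_set (lang rules S) (Phi rules S 3) /\
  forall k : nat, exists ws : seq (seq Sigma),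
    size ws <= \sum_(i < k.+1) (size rules) ^ i /\
    forall w, Phi rules S k w -> w \in ws.
Proof.
move=> _; split; [exact: Phi3_test_set | exact: Phi_size_bound].
Qed.
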